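(* For all $L,R\in\Lambda^{\mathrm{rb}}$, if $L\to R$ then $\operatorname{RB}(L)\equiv\operatorname{RB}(R)$ or $\operatorname{RB}(L)\to_\beta\operatorname{RB}(R)$.
   Context: **$\lambda$-terms and contexts.** $\Lambda$ is the set of untyped $\lambda$-terms (up to $\alpha$-equivalence), and $\to_\beta$ is one-step $\beta$-reduction. A context $C[\,]$ is a $\lambda$-term with exactly one hole $[\,]$. $C[M]$ is the result of filling the hole with $M$; binders of $C$ may capture free variables of $M$. We write $M\,\vec N$ for $M\,N_1\cdots N_n$ (left-associated), where $n\ge 0$. **Atoms and $\Lambda^\bullet$.** For each $M\in\Lambda$ there is a new formal symbol $\underline{M}$, called an atom. Atoms are constants: they have no free variables, and substitution leaves them unchanged. For $M\in\Lambda$, $M^\bullet$ replaces each free occurrence of each variable $x$ in $M$ by the atom $\underline{x}$. Set $\Lambda^\bullet=\{M^\bullet: M\in\Lambda\}$, with substitution extended to these terms by treating atoms as constants. **The set $\Lambda^{\mathrm{rb}}$.** It is the least set such that: 1. $\underline{M}\in\Lambda^{\mathrm{rb}}$ for all $M\in\Lambda$; 2. $\langle C[\,],M\rangle\in\Lambda^{\mathrm{rb}}$ for every context $C[\,]$ and every $M\in\Lambda^\bullet$; 3. $\langle C[\,],M\,\vec N\rangle\in\Lambda^{\mathrm{rb}}$ for every context $C[\,]$, every $M\in\Lambda^{\mathrm{rb}}$ and all $N_1,\dots,N_n\in\Lambda^\bullet$. **The relation $\to$ on $\Lambda^{\mathrm{rb}}$.** It is the least relation satisfying: - (R1) $\langle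 C[\,],\underline{M}\rangle\to\underline{C[M]}$ for $M\in\Lambda$; - (R2) $\langle C[\,],\lambda x.M\rangle\to\langle C[\lambda x.[\,]],M[x:=\underline{x}]\rangle$ for $\lambda x.M\in\Lambda^\bullet$; - (R3) $\langle C[\,],\underline{M}\,N_0\,\vec N\rangle\to\langle C[\,],\langle M\,[\,],N_0\rangle\,\vec N\rangle$ for $M\in\Lambda$ and $N_0,\vec N\in\Lambda^\bullet$; - (R4) $\langle C[\,],(\lambda x.M)\,N_0\,\vec N\rangle\to\langle C[\,],M[x:=N_0]\,\vec N\rangle$ for $\lambda x.M,N_0,\vec N\in\Lambda^\bullet$; - (R5) if $M\to M'$ with $M,M'\in\Lambda^{\mathrm{rb}}$, then $\langle C[\,],M\,\vec N\rangle\to\langle C[\,],M'\,\vec N\rangle$ for every context $C[\,]$ and $\vec N\in\Lambda^\bullet$. **Read-back.** $\operatorname{RB}:\Lambda^\bullet\cup\Lambda^{\mathrm{rb}}\to\Lambda$ is defined by: - $\operatorname{RB}(\langle C[\,],M\,\vec N\rangle)\equiv C[\operatorname{RB}(M)\,\operatorname{RB}(N_1)\cdots\operatorname{RB}(N_n)]$ for $M\in\Lambda^\bullet\cup\Lambda^{\mathrm{rb}}$ and $\vec N\in\Lambda^\bullet$; - $\operatorname{RB}(P\,Q)\equiv\operatorname{RB}(P)\,\operatorname{RB}(Q)$ for $P,Q\in\Lambda^\bullet$; - $\operatorname{RB}(\lambda x.P)\equiv\lambda x.\operatorname{RB}(P[x:=\underline{x}])$ for $\lambda x.P\in\Lambda^\bullet$;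 - $\operatorname{RB}(\underline{P})\equiv P$ for $P\in\Lambda$. *)

(* Untyped lambda-terms in the locally nameless representation:
   bound variables are de Bruijn indices, free variables are names (nat).
   Syntactic equality of locally closed terms is alpha-equivalence. *)
From Stdlib Require Import List Arith.
Import ListNotations.

Definition var := nat.

(** * Lambda (the set Λ = locally closed terms) *)
Inductive term : Type :=
| bvar : nat -> term
| fvar : var -> term
| app  : term -> term -> term
| lam  : term -> term.

Fixpoint lc_at (k : nat) (t : term) : bool :=
  match t with
  | bvar i => i <? k
  | fvar _ => true
  | app t u => lc_at k t && lc_at k u
  | lam t => lc_at (S k) t
  end.

Definition lc (t : term) : Prop := lc_at 0 t = true.

Fixpoint open_rec (k : nat) (u : term) (t : term) : term :=
  match t with
  | bvar i => if i =? k then u else bvar i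
  | fvar x => fvar x
  | app t1 t2 => app (open_rec k u t1) (open_rec k u t2)
  | lam t1 => lam (open_rec (S k) u t1)
  end.

Definition open (t u : term) : term := open_rec 0 u t.

Fixpoint close_rec (k : nat) (x : var) (t : term) : term :=
  match t with
  | bvar i => bvar i
  | fvar y => if y =? x then bvar k else fvar y
  | app t1 t2 => app (close_rec k x t1) (close_rec k x t2)
  | lam t1 => lam (close_rec (S k) x t1)
  end.

Fixpoint fv (t : term) : list var :=
  match t with
  | bvar _ => []
  | fvar x => [x]
  | app t u => fv t ++ fv u
  | lam t => fv t
  end.

(** * Contexts: lambda-terms with exactly one hole; binders are named and
    capture free variables of the term filled in. *)
Inductive ctx : Type :=
| Hole : ctx
| CAppL : ctx -> term -> ctx
| CAppR : term -> ctx -> ctx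
| CLam  : var -> ctx -> ctx.

Fixpoint ctx_ok (C : ctx) : Prop :=
  match C with
  | Hole => True
  | CAppL C t => ctx_ok C /\ lc t
  | CAppR t C => lc t /\ ctx_ok C
  | CLam _ C => ctx_ok C
  end.

Fixpoint fill (C : ctx) (M : term) : term :=
  match C with
  | Hole => M
  | CAppL C t => app (fill C M) t
  | CAppR t C => app t (fill C M)
  | CLam x C => lam (close_rec 0 x (fill C M))
  end.

Fixpoint ctx_plug (C : ctx) (D : ctx) : ctx :=
  match C with
  | Hole => D
  | CAppL C t => CAppL (ctx_plug C D) t
  | CAppR t C => CAppR t (ctx_plug C D)
  | CLam x C => CLam x (ctx_plug C D)
  end.

Definition beta (M N : term) : Prop :=
  exists (C : ctx) (P Q : term),
    ctx_ok C /\ lc (lam P) /\ lc Q /\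
    M = fill C (app (lam P) Q) /\ N = fill C (open P Q).

(** * Extended terms: atoms (underline M for M ∈ Λ, constants) and
    pairs <C[], M>.  Λ^• and Λ^rb are subsets of these. *)
Inductive xterm : Type :=
| xbvar : nat -> xterm
| xatom : term -> xterm
| xapp  : xterm -> xterm -> xterm
| xlam  : xterm -> xterm
| xpair : ctx -> xterm -> xterm.

Definition xapps (M : xterm) (Ns : list xterm) : xterm :=
  fold_left xapp Ns M.

Fixpoint xopen_rec (k : nat) (u : xterm) (t : xterm) : xterm :=
  match t with
  | xbvar i => if i =? k then u else xbvar i
  | xatom M => xatom M
  | xapp t1 t2 => xapp (xopen_rec k u t1) (xopen_rec k u t2)
  | xlam t1 => xlam (xopen_rec (S k) u t1)
  | xpair C t1 => xpair C (xopen_rec k u t1)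
  end.

Definition xopen (t u : xterm) : xterm := xopen_rec 0 u t.

(* names x such that an atom mentioning x occurs in t
   (for t ∈ Λ^•: exactly the x with underline x occurring in t) *)
Fixpoint atom_names (t : xterm) : list var :=
  match t with
  | xbvar _ => []
  | xatom M => fv M
  | xapp t u => atom_names t ++ atom_names u
  | xlam t => atom_names t
  | xpair _ t => atom_names t
  end.

Fixpoint bullet (M : term) : xterm :=
  match M with
  | bvar i => xbvar i
  | fvar x => xatom (fvar x)
  | app t u => xapp (bullet t) (bullet u)
  | lam t => xlam (bullet t)
  end.

Definition Lbullet (t : xterm) : Prop := exists M, lc M /\ t = bullet M.

Inductive Lrb : xterm -> Prop :=
| rb_atom : forall M, lc M -> Lrb (xatom M)
| rb_bul : forall C M, ctx_ok C -> Lbullet M -> Lrb (xpair C M)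
| rb_spine : forall C M Ns, ctx_ok C -> Lrb M -> Forall Lbullet Ns ->
    Lrb (xpair C (xapps M Ns)).

(* In R2 the name x of the bound variable of
   λx.M ∈ Λ^• is any name not occurring as an atom in the body (these are
   exactly the representatives of the alpha-class of λx.M ∈ Λ^•). *)
Inductive rbstep : xterm -> xterm -> Prop :=
| R1 : forall C M, ctx_ok C -> lc M ->
    rbstep (xpair C (xatom M)) (xatom (fill C M))
| R2 : forall C M x, ctx_ok C -> Lbullet (xlam M) ->
    ~ In x (atom_names M) ->
    rbstep (xpair C (xlam M))
           (xpair (ctx_plug C (CLam x Hole)) (xopen M (xatom (fvar x))))
| R3 : forall C M N0 Ns, ctx_ok C -> lc M -> Lbullet N0 -> Forall Lbullet Ns ->
    rbstep (xpair C (xapps (xatom M) (N0 :: Ns)))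
           (xpair C (xapps (xpair (CAppR M Hole) N0) Ns))
| R4 : forall C M N0 Ns, ctx_ok C -> Lbullet (xlam M) -> Lbullet N0 ->
    Forall Lbullet Ns ->
    rbstep (xpair C (xapps (xlam M) (N0 :: Ns)))
           (xpair C (xapps (xopen M N0) Ns))
| R5 : forall C M M' Ns, Lrb M -> Lrb M' -> rbstep M M' ->
    ctx_ok C -> Forall Lbullet Ns ->
    rbstep (xpair C (xapps M Ns)) (xpair C (xapps M' Ns)).

(* Read-back RB : Λ^• ∪ Λ^rb -> Λ.  In the locally nameless representation
   the clause RB(λx.P) = λx.RB(P[x:=underline x]) (x fresh) is simply
   RB(λ P) = λ RB(P), bound indices being kept. *)
Fixpoint RB (t : xterm) : term :=
  match t with
  | xbvar i => bvar i
  | xatom M => M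
  | xapp t u => app (RB t) (RB u)
  | xlam t => lam (RB t)
  | xpair C t => fill C (RB t)
  end.

(* Read-back forgets which part of a term has already been read back: the
   steps R1, R2, R3 only move material between the context and the term
   (R2 being exactly the clause of RB for abstractions), so they leave RB
   unchanged, while R4 contracts the head redex of an applicative spine,
   which under RB is one beta step inside the context C[] and the spine.
   Rule R5 follows by induction, since beta is closed under contexts. *)
From Stdlib Require Import List Arith.

Lemma fill_ctx_plug C D t : fill (ctx_plug C D) t = fill C (fill D t).
Proof. induction C; simpl; congruence. Qed.

Lemma ctx_ok_plug C D : ctx_ok C -> ctx_ok D -> ctx_ok (ctx_plug C D).
Proof. induction C; simpl; tauto. Qed.

Lemma close_open_fresh N k x :
  ~ In x (fv N) -> close_rec k x (open_rec k (fvar x) N) = N.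
Proof.
  revert k; induction N as [i | y | N1 IH1 N2 IH2 | N IH]; intros k Hx; simpl in *.
  - destruct (Nat.eqb_spec i k) as [-> | _]; simpl; [now rewrite Nat.eqb_refl | easy].
  - destruct (Nat.eqb_spec y x) as [-> | _]; tauto.
  - rewrite in_app_iff in Hx. rewrite IH1, IH2; tauto.
  - now rewrite IH.
Qed.

Lemma RB_bullet N : RB (bullet N) = N.
Proof. induction N; simpl; congruence. Qed.

Lemma atom_names_bullet N : atom_names (bullet N) = fv N.
Proof. induction N; simpl; congruence. Qed.

Lemma RB_xopen_rec_bullet N k u :
  RB (xopen_rec k u (bullet N)) = open_rec k (RB u) N.
Proof.
  revert k; induction N; intros k; simpl; try congruence.
  now destruct (_ =? _).
Qed.

Lemma RB_xapps M Ns : RB (xapps M Ns) = fold_left app (map RB Ns) (RB M).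
Proof. unfold xapps. revert M; induction Ns; intros M; simpl; auto. Qed.

Lemma Lbullet_lc_RB N : Lbullet N -> lc (RB N).
Proof. intros [P [HP ->]]. now rewrite RB_bullet. Qed.

Lemma Lbullet_xlam_inv M : Lbullet (xlam M) -> exists P, lc (lam P) /\ M = bullet P.
Proof. intros [[] [HP E]]; inversion E; eauto. Qed.

Lemma RB_xopen M u : Lbullet (xlam M) -> RB (xopen M u) = open (RB M) (RB u).
Proof.
  intros HM. destruct (Lbullet_xlam_inv M HM) as [P [_ ->]].
  unfold xopen, open. now rewrite RB_xopen_rec_bullet, RB_bullet.
Qed.

Lemma close_RB_xopen_fresh M x :
  Lbullet (xlam M) -> ~ In x (atom_names M) ->
  close_rec 0 x (RB (xopen M (xatom (fvar x)))) = RB M.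
Proof.
  intros HM Hx. rewrite (RB_xopen _ _ HM).
  destruct (Lbullet_xlam_inv M HM) as [P [_ ->]].
  rewrite atom_names_bullet in Hx. rewrite RB_bullet.
  now apply close_open_fresh.
Qed.

Lemma beta_redex P Q : lc (lam P) -> lc Q -> beta (app (lam P) Q) (open P Q).
Proof. intros HP HQ. exists Hole, P, Q. simpl; auto. Qed.

Lemma beta_fill D a b : ctx_ok D -> beta a b -> beta (fill D a) (fill D b).
Proof.
  intros HD [C [P [Q [HC [HP [HQ [-> ->]]]]]]].
  exists (ctx_plug D C), P, Q. rewrite !fill_ctx_plug.
  repeat split; auto using ctx_ok_plug.
Qed.

Lemma beta_fold_app l a b :
  Forall lc l -> beta a b -> beta (fold_left app l a) (fold_left app l b).
Proof.
  intros Hl. revert a b; induction Hl as [| N l HN _ IH]; intros a b Hab; simpl; auto.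
  apply IH, (beta_fill (CAppL Hole N)); simpl; auto.
Qed.

Lemma beta_fill_spine C Ns a b :
  ctx_ok C -> Forall Lbullet Ns -> beta a b ->
  beta (fill C (fold_left app (map RB Ns) a)) (fill C (fold_left app (map RB Ns) b)).
Proof.
  intros HC HNs Hab. apply beta_fill, beta_fold_app; auto.
  apply Forall_map, (Forall_impl _ Lbullet_lc_RB HNs).
Qed.

Theorem proposition2 (L R : xterm) :
  Lrb L -> Lrb R -> rbstep L R ->
  RB L = RB R \/ beta (RB L) (RB R).
Proof.
  intros _ _ Hstep.
  induction Hstep as [C M | C M x HC HM Hx | C M N0 Ns | C M N0 Ns HC HM HN0 HNs
                     | C M M' Ns _ _ _ IH HC HNs];
    simpl; rewrite ?RB_xapps; simpl.
  - now left.
  - left. rewrite fill_ctx_plug. simpl.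
    now rewrite close_RB_xopen_fresh.
  - now left.
  - right. rewrite (RB_xopen _ _ HM).
    apply beta_fill_spine; auto.
    apply beta_redex; [exact (Lbullet_lc_RB _ HM) | exact (Lbullet_lc_RB _ HN0)].
  - destruct IH as [-> | Hbeta]; [now left | right].
    now apply beta_fill_spine.
Qed.
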